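(* For any nonzero proper homogeneous ideal $I$ of a standard graded polynomial ring $A$ over a field, $$\min_{i \ge 1} \operatorname{depth} A/I^i = \min_{i \ge 1} \operatorname{depth} I^{i-1}/I^i.$$
   Context: Convention: $I^0=A$. Depth of a finitely generated graded module is $\min\{i: H^i_{\mathfrak m}(M)\neq0\}$ for the maximal homogeneous ideal $\mathfrak m$ of $A$. *)

From HB Require Import structures.
From mathcomp Require Import all_boot all_order all_algebra.
From mathcomp Require Import mpoly.
Set Implicit Arguments. Unset Strict Implicit. Unset Printing Implicit Defensive.
Import Order.TTheory GRing.Theory.
Local Open Scope ring_scope.

Section Defs.
Variables (K : fieldType) (n : nat).
Local Notation A := {mpoly K[n]}.

Definition is_ideal (I : A -> Prop) : Prop :=
  [/\ I 0, (forall p q, I p -> I q -> I (p + q)) & (forall a p, I p -> I (a * p))].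

(* Homogeneous (standard grading: every variable has degree 1, i.e. total
   degree mdeg): the ideal contains all homogeneous components of its elements. *)
Definition is_homog_ideal (I : A -> Prop) : Prop :=
  is_ideal I /\ forall p (d : nat), I p -> I (pihomog mdeg d p).

Fixpoint ideal_pow (I : A -> Prop) (k : nat) : A -> Prop :=
  match k with
  | 0 => fun _ => True
  | k'.+1 => fun p => exists s : seq (A * A),
      (forall x, x \in s -> ideal_pow I k' x.1 /\ I x.2) /\
      p = \sum_(x <- s) x.1 * x.2
  end.

(* Local cohomology H^i_m(N/J), m = (x_1,...,x_n), computed by the Cech
   complex on the variables x_1, ..., x_n, for a module N/J with J <= N
   ideals of A.  The Cech module in degree i is the direct sum over index
   sets S (|S| = i) of the localizations (N/J)_{x_S}, x_S = prod_{j in S} x_j.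
   A cochain is given by numerators c S in N over the common denominator
   x_S^t. *)
Definition xS (S : {set 'I_n}) : A := \prod_(j in S) 'X_j.

(* a / x_T^t is zero in (N/J)_{x_T} *)
Definition loc_zero (J : A -> Prop) (T : {set 'I_n}) (r : A) : Prop :=
  exists N : nat, J (xS T ^+ N * r).

Definition cech_sign (T : {set 'I_n}) (j : 'I_n) : A :=
  (-1) ^+ #|[set k in T | (k < j)%N]|.

(* numerator (over x_T^t) of the Cech differential of c at T *)
Definition cech_d (c : {set 'I_n} -> A) (t : nat) (T : {set 'I_n}) : A :=
  \sum_(j in T) cech_sign T j * c (T :\ j) * 'X_j ^+ t.

Definition cochain (N : A -> Prop) (i : nat) (c : {set 'I_n} -> A) : Prop :=
  forall S : {set 'I_n}, #|S| = i -> N (c S).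

Definition cocycle (J : A -> Prop) (i : nat) (c : {set 'I_n} -> A) (t : nat) :=
  forall T : {set 'I_n}, #|T| = i.+1 -> loc_zero J T (cech_d c t T).

Definition coboundary (N J : A -> Prop) (i : nat) (c : {set 'I_n} -> A)
  (t : nat) : Prop :=
  exists (b : {set 'I_n} -> A) (s : nat), cochain N i.-1 b /\
    forall S : {set 'I_n}, #|S| = i ->
      loc_zero J S (cech_d b s S * xS S ^+ t - c S * xS S ^+ s).

Definition loccoh_nonzero (N J : A -> Prop) (i : nat) : Prop :=
  exists (c : {set 'I_n} -> A) (t : nat),
    [/\ cochain N i c, cocycle J i c t & ~ coboundary N J i c t].

(* depth (N/J) >= d, i.e. min{i : H^i_m(N/J) <> 0} >= d (depth of 0 is oo) *)
Definition depth_ge (N J : A -> Prop) (d : nat) : Prop :=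
  forall e : nat, (e < d)%N -> ~ loccoh_nonzero N J e.

End Defs.

(* Both families of depths are controlled by the long exact sequences of local
   cohomology of the short exact sequences
     0 -> I^(i-1)/I^i -> A/I^i -> A/I^(i-1) -> 0.
   Only two consequences of their exactness are needed, and they are proved
   directly on Cech cochains: for J <= P <= Q, the vanishing of H^e(P/J) and
   H^e(Q/P) forces that of H^e(Q/J), and the vanishing of H^e(Q/J) and
   H^(e-1)(Q/P) forces that of H^e(P/J).  An induction on i (with A/I^0 = 0)
   then gives both inclusions. *)
From HB Require Import structures.
From mathcomp Require Import all_boot all_order all_algebra.
From mathcomp Require Import mpoly ring zify.
Set Implicit Arguments. Unset Strict Implicit.
Import GRing.Theory.
Local Open Scope ring_scope.

Lemma exists_uniform_bound (T : finType) (P : pred T) (Pr : T -> nat -> Prop) :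
  (forall x N M, (N <= M)%N -> Pr x N -> Pr x M) ->
  (forall x, P x -> exists N, Pr x N) ->
  exists N, forall x, P x -> Pr x N.
Proof.
move=> Pr_mono PrP.
suff [N hN] : exists N, forall x, x \in enum T -> P x -> Pr x N.
  by exists N => x; apply: hN; rewrite mem_enum.
elim: (enum T) => [|x0 s [N hN]]; first by exists 0%N.
have [Px0|nPx0] := boolP (P x0); last first.
  exists N => x; rewrite inE => /orP[/eqP-> Px0|]; last exact: hN.
  by rewrite Px0 in nPx0.
have [N0 hN0] := PrP x0 Px0.
exists (maxn N N0) => x; rewrite inE => /orP[/eqP-> _|xs Px].
  exact: Pr_mono (leq_maxr _ _) hN0.
exact: Pr_mono (leq_maxl _ _) (hN x xs Px).
Qed.

Section Cech.
Variables (K : fieldType) (n : nat).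
Local Notation A := {mpoly K[n]}.
Local Notation xS := (@xS K n).
Local Notation cech_sign := (@cech_sign K n).
Implicit Types (I J P Q : A -> Prop) (S T : {set 'I_n}) (b c : {set 'I_n} -> A).

Lemma sum_setD1_antisym T (G : 'I_n -> 'I_n -> A) :
  (forall j k, j \in T -> k \in T -> (j < k)%N -> G k j = - G j k) ->
  \sum_(j in T) \sum_(k in T :\ j) G j k = 0.
Proof.
move=> G_anti.
have split_ltgt j : j \in T -> \sum_(k in T :\ j) G j k =
    \sum_(k in T | (j < k)%N) G j k + \sum_(k in T | (k < j)%N) G j k.
  move=> jT; rewrite (bigID (fun k : 'I_n => (j < k)%N)) /=; congr (_ + _);
  apply: eq_bigl => k; rewrite !inE -val_eqE /=;
  by case: (k \in T); case: (ltngtP j k) => //= ->; rewrite eqxx.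
rewrite (eq_bigr _ split_ltgt) big_split /=.
rewrite (exchange_big_dep (fun k : 'I_n => k \in T)) /=; last by move=> i j _ /andP[].
have swap k : k \in T -> \sum_(j in T | (k \in T) && (j < k)%N) G j k =
    - \sum_(j in T | (j < k)%N) G k j.
  move=> kT; rewrite -sumrN; apply: eq_big => [j|j]; first by rewrite kT.
  by case/and3P=> jT _ kj; rewrite (G_anti j k) // opprK.
by rewrite (eq_bigr _ swap) sumrN addNr.
Qed.

Lemma card_below_setD1 T (j k : 'I_n) : j \in T -> (j < k)%N ->
  #|[set l in T | (l < k)%N]| = (#|[set l in T :\ j | (l < k)%N]|).+1.
Proof.
move=> jT jk; rewrite (cardsD1 j) inE jT jk /=; congr _.+1; apply: eq_card => l.
by rewrite !inE andbA.
Qed.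

Lemma below_setD1_above T (j k : 'I_n) : (j < k)%N ->
  [set l in T :\ k | (l < j)%N] = [set l in T | (l < j)%N].
Proof.
move=> jk; apply/setP => l; rewrite !inE -val_eqE /=.
case: (ltnP l j) => lj; rewrite ?andbF ?andbT //.
by rewrite neq_ltn (ltn_trans lj jk).
Qed.

Lemma cech_dd b s T : cech_d (cech_d b s) s T = 0.
Proof.
rewrite /cech_d.
transitivity (\sum_(j in T) \sum_(k in T :\ j) (cech_sign T j *
    cech_sign (T :\ j) k * b (T :\ j :\ k) * 'X_k ^+ s * 'X_j ^+ s)).
  apply: eq_bigr => j _; rewrite mulr_sumr mulr_suml; apply: eq_bigr => k _; ring.
apply: sum_setD1_antisym => j k jT kT jk.
rewrite /cech_sign (below_setD1_above T jk) (card_below_setD1 jT jk) exprS.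
have -> : T :\ k :\ j = T :\ j :\ k by apply/setP => l; rewrite !inE andbCA.
ring.
Qed.

Lemma xS_setD1 S j : j \in S -> xS (S :\ j) * 'X_j = xS S.
Proof. by move=> jS; rewrite /xS (big_setD1 j jS) /= mulrC. Qed.

Lemma cech_d_xS c t a T :
  cech_d (fun S => xS S ^+ a * c S) (t + a) T = xS T ^+ a * cech_d c t T.
Proof.
rewrite /cech_d mulr_sumr; apply: eq_bigr => j jT.
rewrite -(xS_setD1 jT) exprMn exprD; ring.
Qed.

Lemma cech_dB c1 c2 t T :
  cech_d (fun S => c1 S - c2 S) t T = cech_d c1 t T - cech_d c2 t T.
Proof. by rewrite /cech_d -sumrB; apply: eq_bigr => j _; ring. Qed.

Lemma cech_dD c1 c2 t T :
  cech_d (fun S => c1 S + c2 S) t T = cech_d c1 t T + cech_d c2 t T.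
Proof. by rewrite /cech_d -big_split; apply: eq_bigr => j _ /=; ring. Qed.

Lemma cech_d_card0 b s S : #|S| = 0%N -> cech_d b s S = 0.
Proof. by move=> /cards0_eq ->; rewrite /cech_d big_set0. Qed.

Lemma idealN P p : is_ideal P -> P p -> P (- p).
Proof. by case=> _ _ P_mul Pp; rewrite -mulN1r; apply: P_mul. Qed.

Lemma loc_zero_mull J T a r : is_ideal J -> loc_zero J T r -> loc_zero J T (a * r).
Proof. by case=> _ _ J_mul [N JN]; exists N; rewrite mulrCA; apply: J_mul. Qed.

Lemma loc_zero_xSX J T m r : loc_zero J T (xS T ^+ m * r) -> loc_zero J T r.
Proof. by case=> N JN; exists (N + m)%N; rewrite exprD -mulrA. Qed.

Lemma sub_loc_zero J P T r : (forall p, J p -> P p) ->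
  loc_zero J T r -> loc_zero P T r.
Proof. by move=> JP [N JN]; exists N; apply: JP. Qed.

Definition cech_correct c b t s N S : A :=
  xS S ^+ (N + s) * c S - xS S ^+ (N + t) * cech_d b s S.

Lemma cech_correct_cochain P c b t s e : is_ideal P ->
  (forall S, #|S| = e -> loc_zero P S (cech_d b s S * xS S ^+ t - c S * xS S ^+ s)) ->
  exists N, cochain P e (cech_correct c b t s N).
Proof.
move=> iP hb.
pose Pr S N := P (xS S ^+ N * (cech_d b s S * xS S ^+ t - c S * xS S ^+ s)).
have Pr_mono S N M : (N <= M)%N -> Pr S N -> Pr S M.
  case: iP => _ _ P_mul NM; rewrite /Pr -(subnK NM) exprD -mulrA; exact: P_mul.
have [N hN] := exists_uniform_bound (P := fun S => #|S| == e) Pr_mono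
  (fun S => fun hS => hb S (eqP hS)).
exists N => S /eqP/hN/(idealN iP); congr P; rewrite /cech_correct !exprD; ring.
Qed.

Lemma cech_d_correct c b t s N T :
  cech_d (cech_correct c b t s N) (t + (N + s)) T = xS T ^+ (N + s) * cech_d c t T.
Proof.
rewrite cech_dB cech_d_xS.
have -> : (t + (N + s) = s + (N + t))%N by lia.
by rewrite cech_d_xS cech_dd mulr0 subr0.
Qed.

Lemma loccoh_vanish_extension J P Q e :
  is_ideal J -> is_ideal P -> is_ideal Q ->
  (forall p, J p -> P p) -> (forall p, P p -> Q p) ->
  ~ loccoh_nonzero P J e -> ~ loccoh_nonzero Q P e -> ~ loccoh_nonzero Q J e.
Proof.
(* Diagram chase: a cocycle [c] of Q/J bounds [d b] in Q/P; the corrected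
   cochain lies in P and is a cocycle of P/J, so it bounds [d b'] there, and
   [b] and [b'] combine into a bounding cochain for [c] in Q/J. *)
move=> iJ iP iQ JP PQ nHPJ nHQP [c [t [cc cy ncb]]].
apply: nHQP; exists c, t; split => //.
  by move=> T hT; apply: sub_loc_zero JP (cy T hT).
move=> [b [s [bc hb]]].
have [N c'P] := cech_correct_cochain iP hb.
apply: nHPJ; exists (cech_correct c b t s N), (t + (N + s))%N; split => //.
  by move=> T hT; rewrite cech_d_correct; apply: loc_zero_mull => //; apply: cy.
move=> [b' [s' [b'c hb']]].
apply: ncb; exists (fun R => xS R ^+ s * b' R + xS R ^+ s' * b R), (s' + s)%N.
split.
  move=> R hR; case: iQ => _ Q_add Q_mul.
  by apply: Q_add; apply: Q_mul; [apply: PQ; apply: b'c | apply: bc].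
move=> S hS; apply: (loc_zero_xSX (m := N)).
have := hb' S hS; rewrite cech_dD !cech_d_xS [(s' + s)%N]addnC cech_d_xS.
by congr loc_zero; rewrite /cech_correct !exprD; ring.
Qed.

Lemma loccoh_vanish_sub J P Q e :
  is_ideal J -> is_ideal P -> (forall p, J p -> P p) -> (forall p, P p -> Q p) ->
  ~ loccoh_nonzero Q J e -> (0 < e -> ~ loccoh_nonzero Q P e.-1)%N ->
  ~ loccoh_nonzero P J e.
Proof.
(* Diagram chase: a cocycle [c] of P/J bounds [d b] in Q/J; then [b] is a
   cocycle of Q/P, hence bounds there, and the corrected [b] lies in P and
   bounds [c] in P/J. *)
move=> iJ iP JP PQ nHQJ nHQP [c [t [cc cy ncb]]].
apply: nHQJ; exists c, t; split => //.
  by move=> S hS; apply: PQ; apply: cc.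
move=> [b [s [bc hb]]].
case: e nHQP cc cy ncb bc hb => [|e] nHQP cc cy ncb bc hb.
  apply: ncb; exists (fun _ => 0), s; split; first by move=> S _; case: iP.
  by move=> S hS; have := hb S hS; rewrite !cech_d_card0.
apply: (nHQP isT); exists b, s; split => //.
  move=> T hT; have [M hM] := hb T hT; exists (M + t)%N.
  case: (iP) => _ P_add P_mul.
  have cP : P (xS T ^+ M * (c T * xS T ^+ s)).
    by rewrite mulrCA mulrC; apply: P_mul; apply: cc.
  by have := P_add _ _ (JP _ hM) cP; congr P; rewrite exprD; ring.
move=> [b2 [s2 [b2c hb2]]].
have [N b'P] := cech_correct_cochain iP hb2.
apply: ncb; exists (cech_correct b b2 s s2 N), (s + (N + s2))%N; split => //.
move=> S hS; rewrite cech_d_correct.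
have := loc_zero_mull (xS S ^+ (N + s2)) iJ (hb S hS).
by congr loc_zero; rewrite !exprD; ring.
Qed.

Lemma loccoh_quotT_vanish P e : P 0 -> ~ loccoh_nonzero P (fun _ => True) e.
Proof. by move=> P0 [c [t [_ _ ncb]]]; apply: ncb; exists (fun _ => 0), 0%N; split. Qed.

Lemma is_ideal_pow I k : is_ideal (ideal_pow I k).
Proof.
elim: k => [|k [_ Ik_add Ik_mul]]; first by [].
split.
- by exists [::]; rewrite big_nil.
- move=> p q [s1 [h1 ->]] [s2 [h2 ->]]; exists (s1 ++ s2); rewrite big_cat.
  by split=> // x; rewrite mem_cat => /orP[]; [apply: h1 | apply: h2].
- move=> a p [s [h ->]]; exists [seq (a * x.1, x.2) | x <- s]; split.
    by move=> x /mapP [y ys ->] /=; have [h1 h2] := h y ys; split=> //; apply: Ik_mul.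
  by rewrite big_map mulr_sumr; apply: eq_bigr => y _; rewrite mulrA.
Qed.

Lemma ideal_powS I k p : ideal_pow I k.+1 p -> ideal_pow I k p.
Proof.
have [Ik0 Ik_add Ik_mul] := is_ideal_pow I k.
move=> [s [h ->]]; elim: s h => [|x s IH] h; first by rewrite big_nil.
rewrite big_cons; apply: Ik_add.
  by rewrite mulrC; apply: Ik_mul; exact: (h x (mem_head x s)).1.
by apply: IH => y ys; apply: h; rewrite inE ys orbT.
Qed.

End Cech.

Theorem lemma4p4 (K : fieldType) (n : nat) (I : {mpoly K[n]} -> Prop) :
  is_homog_ideal I ->
  (exists p, I p /\ p != 0) ->
  ~ I 1 ->
  forall d : nat,
    (forall i : nat, (0 < i)%N -> depth_ge (fun _ => True) (ideal_pow I i) d) <->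
    (forall i : nat, (0 < i)%N -> depth_ge (ideal_pow I i.-1) (ideal_pow I i) d).
Proof.
move=> _ _ _ d.
have iA : is_ideal (fun _ : {mpoly K[n]} => True) by [].
split.
- move=> depthA [//|i] _ e ed.
  apply: (loccoh_vanish_sub (Q := fun _ => True)) => //;
    try exact: is_ideal_pow; try exact: ideal_powS; first exact: depthA.
  case: i => [|i] e0; first exact: loccoh_quotT_vanish.
  by apply: depthA => //; case: e e0 ed => // e _ /ltnW.
- move=> depthI; elim=> [//|i IH] _ e ed.
  apply: (loccoh_vanish_extension (P := ideal_pow I i)) => //;
    try exact: is_ideal_pow; try exact: ideal_powS; first exact: (depthI i.+1 isT e ed).
  by case: i IH => [|i] IH; [exact: loccoh_quotT_vanish | exact: IH].
Qed.
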